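(* For $x\in(0,1)$ let $I(x,1)=\exp\!\big(\frac{x\ln x}{x-1}-1\big)$ and $A_p(x,1)=\big(\frac{x^p+1}{2}\big)^{1/p}$ for $p\ne0$, $A_0(x,1)=\sqrt{x}$. For $p\in(0,2/3]$ and all $x\in(0,1)$, $$A_p(x,1)<I(x,1)<A_p(x,1)^{p/\ln2}<e^{-1}2^{1/p}A_p(x,1),$$ and the coefficients $1$ and $e^{-1}2^{1/p}$ are best possible, i.e. $1$ is the largest $c$ and $e^{-1}2^{1/p}$ is the smallest $C$ such that $cA_p(x,1)\le I(x,1)\le CA_p(x,1)$ for all $x\in(0,1)$. For $p\ge1$ all three inequalities are reversed. Moreover, for each fixed $x\in(0,1)$, $p\mapsto A_p(x,1)$ is increasing on $\mathbb R$, $p\mapsto A_p(x,1)^{p/\ln2}$ is decreasing on $\mathbb R$, and $p\mapsto e^{-1}2^{1/p}A_p(x,1)$ is decreasing on $(0,\infty)$.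
   Context: $I$ is the identric mean and $A_p$ the power mean, evaluated at $(x,1)$. *)

From Stdlib Require Import Reals.
Open Scope R_scope.

Definition identric1 (x : R) : R := exp (x * ln x / (x - 1) - 1).

Definition powmean1 (p x : R) : R :=
  if Req_EM_T p 0 then sqrt x
  else Rpower ((Rpower x p + 1) / 2) (1 / p).

Definition powmean1_pow (p x : R) : R := Rpower (powmean1 p x) (p / ln 2).

Definition upper_bound1 (p x : R) : R := exp (-1) * Rpower 2 (1 / p) * powmean1 p x.

(* Everything is compared on the logarithmic scale.  With m_p(x) = ln((x^p+1)/2) we have
   ln A_p = m_p/p, ln (A_p^(p/ln 2)) = m_p/ln 2, ln (e^-1 2^(1/p) A_p) = -1 + ln(x^p+1)/p and
   ln I = x ln x/(x-1) - 1.  Bernoulli's inequality makes m_p/p increasing and ln(x^p+1)/p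
   decreasing in p, and m_p is decreasing because x < 1, so the first two inequalities reduce
   to p = 2/3 and p = 1.  Multiplying by x - 1 < 0 turns each of these into the sign of a
   one-variable function vanishing at x = 1 (in the variable s = x^(1/3) when p = 2/3), which
   is settled by differentiating two or three times.  The third inequality compares
   ln(x^p+1)/ln 2 with ln(x^p+1)/p, that is p with ln 2, and 2/3 < ln 2 < 1.  The constants
   are optimal since I/A_p tends to 1 as x -> 1 and to e^-1 2^(1/p) as x -> 0. *)

From Stdlib Require Import Reals Lra Psatz.
From Coquelicot Require Import Coquelicot.
Open Scope R_scope.

Lemma lt_of_derive_pos (f d : R -> R) (a b : R) : a < b ->
  (forall t, a <= t <= b -> is_derive f t (d t)) ->
  (forall t, a < t < b -> 0 < d t) -> f a < f b.
Proof.
intros Hab Hf Hd.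
destruct (MVT_cor2 f d a b Hab) as [c [Hfc Hc]].
- intros c Hc; apply is_derive_Reals, Hf, Hc.
- assert (0 < d c) by (apply Hd, Hc); nra.
Qed.

Lemma gt_of_derive_neg (f d : R -> R) (a b : R) : a < b ->
  (forall t, a <= t <= b -> is_derive f t (d t)) ->
  (forall t, a < t < b -> d t < 0) -> f b < f a.
Proof.
intros Hab Hf Hd.
destruct (MVT_cor2 f d a b Hab) as [c [Hfc Hc]].
- intros c Hc; apply is_derive_Reals, Hf, Hc.
- assert (d c < 0) by (apply Hd, Hc); nra.
Qed.

(* The hypothesis on [d] says that [f'] changes sign at most once on ]a, b[,
   from negative to positive. *)
Lemma lt0_between_roots (f d : R -> R) (a b : R) : a < b -> f a = 0 -> f b = 0 ->
  (forall t, a <= t <= b -> is_derive f t (d t)) ->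
  (forall t1 t2, a < t1 -> t1 < t2 -> t2 < b -> 0 <= d t1 -> 0 < d t2) ->
  forall x, a < x < b -> f x < 0.
Proof.
intros Hab Ha Hb Hf Hd x Hx.
destruct (MVT_cor2 f d a x (proj1 Hx)) as [c1 [Hc1 Hc1']].
{ intros c Hc; apply is_derive_Reals, Hf; lra. }
destruct (MVT_cor2 f d x b (proj2 Hx)) as [c2 [Hc2 Hc2']].
{ intros c Hc; apply is_derive_Reals, Hf; lra. }
destruct (Rle_lt_dec 0 (d c1)) as [Hd1 | Hd1].
- assert (0 < d c2) by (apply (Hd c1 c2); lra); nra.
- nra.
Qed.

Lemma ln_lt_0 (x : R) : 0 < x < 1 -> ln x < 0.
Proof. intros Hx; rewrite <- ln_1; apply ln_increasing; lra. Qed.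

Lemma ln2_gt_2_3 : 2 / 3 < ln 2.
Proof.
assert (Hexp : exp (1 / 15) <= 15 / 14).
{ assert (H := exp_ineq1_le (- (1 / 15))).
  assert (E : exp (1 / 15) * exp (- (1 / 15)) = 1)
    by (rewrite <- exp_plus, Rplus_opp_r; apply exp_0).
  assert (0 < exp (1 / 15)) by apply exp_pos; nra. }
assert (Hln : 1 / 15 <= ln (15 / 14)).
{ rewrite <- (ln_exp (1 / 15)); apply ln_le; [apply exp_pos | exact Hexp]. }
assert (Hpow : ln ((15 / 14) ^ 10) < ln 2)
  by (apply ln_increasing; simpl; lra).
rewrite ln_pow in Hpow by lra; simpl INR in Hpow; lra.
Qed.

Lemma ln2_lt_1 : ln 2 < 1.
Proof.
rewrite <- (ln_exp 1); apply ln_increasing; [lra|].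
assert (H := exp_ineq1 1); lra.
Qed.

Lemma ln2_pos : 0 < ln 2.
Proof. assert (H := ln2_gt_2_3); lra. Qed.

Lemma Rdiv_gt_1 (p q : R) : 0 < p -> p < q -> 1 < q / p.
Proof.
intros Hp Hpq; replace (q / p) with (1 + (q - p) / p) by (field; lra).
assert (0 < (q - p) / p) by (apply Rdiv_lt_0_compat; lra); lra.
Qed.

Lemma Rdiv_gt_1_neg (p q : R) : p < q -> q < 0 -> 1 < p / q.
Proof.
intros Hpq Hq; replace (p / q) with (1 + (q - p) / - q) by (field; lra).
assert (0 < (q - p) / - q) by (apply Rdiv_lt_0_compat; lra); lra.
Qed.

Lemma ln_midpoint_exp_gt (t : R) : t <> 0 -> t / 2 < ln ((exp t + 1) / 2).
Proof.
intros Ht.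
assert (E : exp t = exp (t / 2) * exp (t / 2)) by (rewrite <- exp_plus; f_equal; field).
assert (N : exp (t / 2) <> 1).
{ intro H; apply Ht.
  assert (t / 2 = 0) by (rewrite <- ln_1, <- H, ln_exp; reflexivity); lra. }
assert (P : 0 < (exp (t / 2) - 1) * (exp (t / 2) - 1)).
{ destruct (Rle_lt_dec (exp (t / 2)) 1); [assert (exp (t / 2) < 1) by lra|]; nra. }
rewrite <- (ln_exp (t / 2)) at 1; apply ln_increasing; [apply exp_pos | lra].
Qed.

(* [e^(rL) = e^L e^((r-1)L) > e^L (1 + (r-1)L)], and [L e^L > e^L - 1] since [e^(-L) > 1 - L]. *)
Lemma bernoulli_strict (r y : R) : 1 < r -> 0 < y -> y <> 1 ->
  1 + r * (y - 1) < exp (r * ln y).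
Proof.
intros Hr Hy Hy1.
set (L := ln y).
assert (HL : L <> 0) by (intro H; apply Hy1; rewrite <- (exp_ln y), <- exp_0 by lra; f_equal; exact H).
assert (Ey : exp L = y) by (apply exp_ln; lra).
assert (H1 : 1 + (r - 1) * L < exp ((r - 1) * L)) by (apply exp_ineq1; intro; nra).
assert (H2 : 1 + - L < exp (- L)) by (apply exp_ineq1; lra).
assert (E1 : exp (r * L) = exp L * exp ((r - 1) * L)) by (rewrite <- exp_plus; f_equal; ring).
assert (E2 : exp L * exp (- L) = 1) by (rewrite <- exp_plus, Rplus_opp_r; apply exp_0).
rewrite E1; rewrite Ey in E2 |- *.
assert (y * (1 + (r - 1) * L) < y * exp ((r - 1) * L)) by (apply Rmult_lt_compat_l; lra).
assert ((r - 1) * (y * (1 + - L)) < (r - 1) * (y * exp (- L))).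
{ apply Rmult_lt_compat_l; [lra|]; apply Rmult_lt_compat_l; lra. }
nra.
Qed.

(* Convexity of [t ^ r]: Bernoulli's inequality at [u / m] and [1 / m], summed. *)
Lemma ln_midpoint_pow_gt (r u : R) : 1 < r -> 0 < u -> u <> 1 ->
  r * ln ((u + 1) / 2) < ln ((exp (r * ln u) + 1) / 2).
Proof.
intros Hr Hu Hu1.
set (m := (u + 1) / 2).
assert (Hm : 0 < m) by (unfold m; lra).
assert (Hum : u / m <> 1).
{ intro H; apply Hu1.
  assert (u = m) by (replace u with (u / m * m) at 1 by (field; lra); rewrite H; ring).
  unfold m in *; lra. }
assert (Hm1 : / m <> 1).
{ intro H; apply Hu1.
  assert (m = 1) by (rewrite <- (Rinv_inv m), H; apply Rinv_1).
  unfold m in *; lra. }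
assert (B1 := bernoulli_strict r (u / m) Hr ltac:(apply Rdiv_lt_0_compat; lra) Hum).
assert (B2 := bernoulli_strict r (/ m) Hr ltac:(apply Rinv_0_lt_compat; lra) Hm1).
rewrite ln_div in B1 by lra; rewrite ln_Rinv in B2 by lra.
set (E := exp (r * ln u)); set (F := exp (r * ln m)).
assert (EF1 : exp (r * (ln u - ln m)) = E / F)
  by (unfold E, F; unfold Rdiv; rewrite <- exp_Ropp, <- exp_plus; f_equal; ring).
assert (EF2 : exp (r * - ln m) = / F)
  by (unfold F; rewrite <- exp_Ropp; f_equal; ring).
rewrite EF1 in B1; rewrite EF2 in B2.
assert (HF : 0 < F) by apply exp_pos.
assert (S : u / m + / m = 2) by (unfold m; field; lra).
assert (HFE : F < (E + 1) / 2).
{ apply (Rmult_lt_reg_r (/ F)); [apply Rinv_0_lt_compat; lra|].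
  replace (F * / F) with 1 by (field; lra).
  replace ((E + 1) / 2 * / F) with ((E / F + / F) / 2) by (field; lra). nra. }
rewrite <- (ln_exp (r * ln m)); apply ln_increasing; [apply exp_pos | exact HFE].
Qed.

Lemma pow_add1_lt (r u : R) : 1 < r -> 0 < u < 1 ->
  exp (r * ln u) + 1 < exp (r * ln (1 + u)).
Proof.
intros Hr Hu.
assert (B := bernoulli_strict r (1 + u) Hr ltac:(lra) ltac:(lra)).
assert (ln u < 0) by (apply ln_lt_0; lra).
assert (Hru : exp (r * ln u) < exp (ln u)) by (apply exp_increasing; nra).
rewrite exp_ln in Hru by lra; nra.
Qed.

Definition lnI (x : R) : R := x * ln x / (x - 1) - 1.
Definition lnm (p x : R) : R := ln ((exp (p * ln x) + 1) / 2).
Definition lnA (p x : R) : R := if Req_EM_T p 0 then ln x / 2 else 1 / p * lnm p x.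
Definition lnub (p x : R) : R := -1 + 1 / p * ln (exp (p * ln x) + 1).

Lemma lnA_0 (x : R) : lnA 0 x = ln x / 2.
Proof. unfold lnA; destruct (Req_EM_T 0 0); [reflexivity | lra]. Qed.

Lemma lnA_neq0 (p x : R) : p <> 0 -> lnA p x = 1 / p * lnm p x.
Proof. intros Hp; unfold lnA; destruct (Req_EM_T p 0); [contradiction | reflexivity]. Qed.

Lemma identric1_exp (x : R) : identric1 x = exp (lnI x).
Proof. reflexivity. Qed.

Lemma powmean1_exp (p x : R) : 0 < x -> powmean1 p x = exp (lnA p x).
Proof.
intros Hx; unfold powmean1, lnA; destruct (Req_EM_T p 0).
- rewrite <- Rpower_sqrt by exact Hx; unfold Rpower; f_equal; field.
- reflexivity.
Qed.

Lemma powmean1_pow_exp (p x : R) : 0 < x -> powmean1_pow p x = exp (lnm p x / ln 2).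
Proof.
intros Hx; assert (L := ln2_pos).
unfold powmean1_pow; rewrite powmean1_exp by exact Hx; unfold Rpower; rewrite ln_exp; f_equal.
unfold lnA; destruct (Req_EM_T p 0) as [->|]; [|field; lra].
unfold lnm; rewrite Rmult_0_l, exp_0; replace ((1 + 1) / 2) with 1 by field; rewrite ln_1; field; lra.
Qed.

Lemma upper_bound1_exp (p x : R) : 0 < x -> p <> 0 -> upper_bound1 p x = exp (lnub p x).
Proof.
intros Hx Hp; unfold upper_bound1, lnub, Rpower; rewrite powmean1_exp, lnA_neq0 by assumption.
unfold lnm; rewrite <- !exp_plus; f_equal.
assert (0 < exp (p * ln x)) by apply exp_pos.
rewrite ln_div by lra; field; exact Hp.
Qed.

Lemma lnI_gt_m1 (x : R) : 0 < x < 1 -> -1 < lnI x.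
Proof.
intros Hx; assert (ln x < 0) by (apply ln_lt_0, Hx); unfold lnI.
assert (0 < x * ln x / (x - 1)).
{ replace (x * ln x / (x - 1)) with (x * - ln x / (1 - x)) by (field; lra).
  apply Rdiv_lt_0_compat; nra. }
lra.
Qed.

Lemma lnm_decreasing (x p q : R) : 0 < x < 1 -> p < q -> lnm q x < lnm p x.
Proof.
intros Hx Hpq; unfold lnm; assert (ln x < 0) by (apply ln_lt_0, Hx).
assert (exp (q * ln x) < exp (p * ln x)) by (apply exp_increasing; nra).
assert (0 < exp (q * ln x)) by apply exp_pos.
apply ln_increasing; lra.
Qed.

Lemma lnm_gt_half (p x : R) : 0 < x < 1 -> p <> 0 -> p * ln x / 2 < lnm p x.
Proof.
intros Hx Hp; assert (ln x < 0) by (apply ln_lt_0, Hx).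
apply ln_midpoint_exp_gt; intro; nra.
Qed.

Lemma lnm_scale_gt (x a r : R) : 0 < x < 1 -> a <> 0 -> 1 < r ->
  r * lnm a x < lnm (r * a) x.
Proof.
intros Hx Ha Hr; assert (Hl : ln x < 0) by (apply ln_lt_0, Hx).
set (u := exp (a * ln x)).
assert (Hu1 : u <> 1).
{ intro H; unfold u in H.
  assert (a * ln x = 0) by (rewrite <- ln_1, <- H, ln_exp; reflexivity); nra. }
assert (J := ln_midpoint_pow_gt r u Hr ltac:(apply exp_pos) Hu1).
unfold lnm; unfold u in J; rewrite ln_exp in J.
replace (r * (a * ln x)) with (r * a * ln x) in J by ring; exact J.
Qed.

Lemma lnA_lt_pos (x p q : R) : 0 < x < 1 -> 0 < p -> p < q -> lnA p x < lnA q x.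
Proof.
intros Hx Hp Hpq; rewrite !lnA_neq0 by lra.
assert (Hr := Rdiv_gt_1 p q Hp Hpq).
assert (S := lnm_scale_gt x p (q / p) Hx ltac:(lra) Hr).
replace (q / p * p) with q in S by (field; lra).
replace (1 / p * lnm p x) with (1 / q * (q / p * lnm p x)) by (field; lra).
apply Rmult_lt_compat_l; [apply Rdiv_lt_0_compat; lra | exact S].
Qed.

Lemma lnA_lt_neg (x p q : R) : 0 < x < 1 -> p < q -> q < 0 -> lnA p x < lnA q x.
Proof.
intros Hx Hpq Hq; rewrite !lnA_neq0 by lra.
assert (Hr := Rdiv_gt_1_neg p q Hpq Hq).
assert (S := lnm_scale_gt x q (p / q) Hx ltac:(lra) Hr).
replace (p / q * q) with p in S by (field; lra).
replace (1 / q * lnm q x) with (1 / p * (p / q * lnm q x)) by (field; lra).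
assert (1 / p < 0) by (unfold Rdiv; rewrite Rmult_1_l; apply Rinv_lt_0_compat; lra).
nra.
Qed.

Lemma lnA_lt_0 (x p : R) : 0 < x < 1 -> p < 0 -> lnA p x < lnA 0 x.
Proof.
intros Hx Hp; rewrite lnA_0, lnA_neq0 by lra.
assert (H := lnm_gt_half p x Hx ltac:(lra)).
assert (1 / p < 0) by (unfold Rdiv; rewrite Rmult_1_l; apply Rinv_lt_0_compat; lra).
replace (ln x / 2) with (1 / p * (p * ln x / 2)) by (field; lra).
nra.
Qed.

Lemma lnA_0_lt (x q : R) : 0 < x < 1 -> 0 < q -> lnA 0 x < lnA q x.
Proof.
intros Hx Hq; rewrite lnA_0, lnA_neq0 by lra.
assert (H := lnm_gt_half q x Hx ltac:(lra)).
replace (ln x / 2) with (1 / q * (q * ln x / 2)) by (field; lra).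
apply Rmult_lt_compat_l; [apply Rdiv_lt_0_compat; lra | exact H].
Qed.

Lemma lnA_increasing (x p q : R) : 0 < x < 1 -> p < q -> lnA p x < lnA q x.
Proof.
intros Hx Hpq.
destruct (Rtotal_order p 0) as [Hp | [-> | Hp]];
  destruct (Rtotal_order q 0) as [Hq | [-> | Hq]]; try lra.
- apply lnA_lt_neg; assumption.
- apply lnA_lt_0; assumption.
- apply (Rlt_trans _ (lnA 0 x)); [apply lnA_lt_0 | apply lnA_0_lt]; assumption.
- apply lnA_0_lt; assumption.
- apply lnA_lt_pos; assumption.
Qed.

Lemma lnub_decreasing (x p q : R) : 0 < x < 1 -> 0 < p -> p < q -> lnub q x < lnub p x.
Proof.
intros Hx Hp Hpq; unfold lnub.
assert (Hl : ln x < 0) by (apply ln_lt_0, Hx).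
set (u := exp (p * ln x)).
assert (Hu : 0 < u < 1)
  by (split; [apply exp_pos | unfold u; rewrite <- exp_0; apply exp_increasing; nra]).
assert (Hr := Rdiv_gt_1 p q Hp Hpq).
assert (S := pow_add1_lt (q / p) u Hr Hu).
replace (exp (q / p * ln u)) with (exp (q * ln x)) in S
  by (unfold u; rewrite ln_exp; f_equal; field; lra).
assert (S2 : ln (exp (q * ln x) + 1) < q / p * ln (1 + u)).
{ rewrite <- (ln_exp (q / p * ln (1 + u))).
  assert (0 < exp (q * ln x)) by apply exp_pos.
  apply ln_increasing; lra. }
replace (1 / p * ln (u + 1)) with (1 / q * (q / p * ln (1 + u)))
  by (rewrite Rplus_comm; field; lra).
apply Rplus_lt_compat_l, Rmult_lt_compat_l; [apply Rdiv_lt_0_compat; lra | exact S2].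
Qed.

Lemma lnm_div_ln2_lnub_cmp (x p : R) : 0 < x < 1 -> 0 < p ->
  (p < ln 2 -> lnm p x / ln 2 < lnub p x) /\ (ln 2 < p -> lnub p x < lnm p x / ln 2).
Proof.
intros Hx Hp; assert (L := ln2_pos); unfold lnm, lnub.
assert (Hy : 0 < exp (p * ln x)) by apply exp_pos.
set (y := exp (p * ln x)) in *.
rewrite ln_div by lra.
assert (HN : 0 < ln (y + 1)) by (rewrite <- ln_1; apply ln_increasing; lra).
set (N := ln (y + 1)) in *.
replace ((N - ln 2) / ln 2) with (N * / ln 2 - 1) by (field; lra).
replace (1 / p * N) with (N * / p) by (field; lra).
split; intros H.
- assert (/ ln 2 < / p) by (apply Rinv_lt_contravar; nra); nra.
- assert (/ p < / ln 2) by (apply Rinv_lt_contravar; nra); nra.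
Qed.

(* Clearing the denominator [x - 1 < 0] of [lnI]: [v < lnI x] iff the gap is negative. *)
Definition identric_gap (x v : R) : R := ln x - (1 - 1 / x) * (1 + v).

Lemma identric_gap_1 (v : R) : identric_gap 1 v = 0.
Proof. unfold identric_gap; rewrite ln_1; field. Qed.

Lemma lnI_sub_gap (x v : R) : 0 < x < 1 ->
  (x - 1) * (lnI x - v) = x * identric_gap x v.
Proof. intros Hx; unfold lnI, identric_gap; field; lra. Qed.

Lemma lt_lnI_of_gap_neg (x v : R) : 0 < x < 1 -> identric_gap x v < 0 -> v < lnI x.
Proof. intros Hx Hg; assert (E := lnI_sub_gap x v Hx); nra. Qed.

Lemma lnI_lt_of_gap_pos (x v : R) : 0 < x < 1 -> 0 < identric_gap x v -> lnI x < v.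
Proof. intros Hx Hg; assert (E := lnI_sub_gap x v Hx); nra. Qed.

Lemma ln_half : ln (1 / 2) = - ln 2.
Proof. unfold Rdiv; rewrite Rmult_1_l; apply ln_Rinv; lra. Qed.

Lemma exists_cube_root (x : R) : 0 < x < 1 -> exists s, 0 < s < 1 /\ x = s ^ 3.
Proof.
intros Hx; exists (Rpower x (1 / 3)); split.
- split; [apply exp_pos|].
  assert (ln x < 0) by (apply ln_lt_0, Hx).
  rewrite <- exp_0 at 2; apply exp_increasing; lra.
- rewrite <- Rpower_pow by apply exp_pos; rewrite Rpower_mult.
  simpl INR; replace (1 / 3 * (1 + 1 + 1)) with 1 by field.
  symmetry; apply Rpower_1; lra.
Qed.

Lemma lnm_2_3_cube (s : R) : 0 < s -> lnm (2 / 3) (s ^ 3) = ln ((s ^ 2 + 1) / 2).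
Proof.
intros Hs; unfold lnm; rewrite ln_pow by exact Hs.
replace (2 / 3 * (INR 3 * ln s)) with (INR 2 * ln s) by (simpl; field).
change (exp (INR 2 * ln s)) with (Rpower s (INR 2)); rewrite Rpower_pow by exact Hs.
reflexivity.
Qed.

Ltac derive_side_conditions :=
  repeat split;
  try (apply Rgt_not_eq; repeat apply Rmult_lt_0_compat; lra);
  try (repeat apply Rmult_lt_0_compat; lra);
  try (intro; nra); try nra.

Ltac solve_derive := assert (L2 := ln2_pos); auto_derive;
  [derive_side_conditions | unfold Rdiv; cbn [pow]; field; derive_side_conditions].

(* For p = 2/3 the substitution x = s^3 makes x^p = s^2 polynomial. *)
Definition gap_mean23 (s : R) : R := identric_gap (s ^ 3) (3 / 2 * ln ((s ^ 2 + 1) / 2)).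
Definition gap_mean23_num (s : R) : R :=
  s ^ 3 - 1 - 3 / 2 * ln ((s ^ 2 + 1) / 2) - (s ^ 5 - s ^ 2) / (1 + s ^ 2).

Lemma gap_mean23_num_pos (s : R) : 0 < s < 1 -> 0 < gap_mean23_num s.
Proof.
intros Hs.
replace 0 with (gap_mean23_num 1)
  by (unfold gap_mean23_num; replace ((1 ^ 2 + 1) / 2) with 1 by field; rewrite ln_1; field).
apply (gt_of_derive_neg _ (fun t => - (t * (1 - t) ^ 3 / (1 + t ^ 2) ^ 2))); [lra | |].
- intros t Ht; unfold gap_mean23_num; solve_derive.
- intros t Ht; apply Ropp_lt_gt_0_contravar, Rdiv_lt_0_compat.
  + apply Rmult_lt_0_compat; [lra | apply pow_lt; lra].
  + apply pow_lt; nra.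
Qed.

Lemma gap_mean23_neg (s : R) : 0 < s < 1 -> gap_mean23 s < 0.
Proof.
intros Hs.
replace 0 with (gap_mean23 1) by (unfold gap_mean23; rewrite pow1; apply identric_gap_1).
apply (lt_of_derive_pos _ (fun t => 3 * gap_mean23_num t / t ^ 4)); [lra | |].
- intros t Ht; unfold gap_mean23, identric_gap, gap_mean23_num; solve_derive.
- intros t Ht; apply Rdiv_lt_0_compat; [| apply pow_lt; lra].
  assert (0 < gap_mean23_num t) by (apply gap_mean23_num_pos; lra); lra.
Qed.

Definition gap_pow23 (s : R) : R := identric_gap (s ^ 3) (ln ((s ^ 2 + 1) / 2) / ln 2).
Definition gap_pow23_num (s : R) : R :=
  ln 2 * (s ^ 3 - 1) - ln ((s ^ 2 + 1) / 2) + 2 / 3 * (s ^ 2 - s ^ 5) / (1 + s ^ 2).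
Definition gap_pow23_num_slope (s : R) : R :=
  3 * ln 2 * s - 2 / (1 + s ^ 2) + 2 / 3 * (2 - 5 * s ^ 3 - 3 * s ^ 5) / (1 + s ^ 2) ^ 2.

(* This is where [2/3 < ln 2] is needed. *)
Lemma gap_pow23_num_slope_increasing (t1 t2 : R) : 0 <= t1 -> t1 < t2 -> t2 <= 1 ->
  gap_pow23_num_slope t1 < gap_pow23_num_slope t2.
Proof.
intros H1 H12 H2.
apply (lt_of_derive_pos _
  (fun s => 3 * ln 2 - 2 + (1 - s) ^ 2 * (- 2 * s ^ 2 + 8 * s + 6) / (3 * (1 + s ^ 2) ^ 3)));
  [lra | |].
- intros t Ht; unfold gap_pow23_num_slope; solve_derive.
- intros t Ht; assert (L := ln2_gt_2_3).
  assert (0 <= (1 - t) ^ 2 * (- 2 * t ^ 2 + 8 * t + 6) / (3 * (1 + t ^ 2) ^ 3)); [|lra].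
  apply Rdiv_le_0_compat.
  + apply Rmult_le_pos; [apply pow2_ge_0 | nra].
  + apply Rmult_lt_0_compat; [lra | apply pow_lt; nra].
Qed.

Lemma gap_pow23_num_neg (s : R) : 0 < s < 1 -> gap_pow23_num s < 0.
Proof.
intros Hs.
apply (lt0_between_roots _ (fun t => t * gap_pow23_num_slope t) 0 1); [lra | | | | | exact Hs].
- unfold gap_pow23_num; replace ((0 ^ 2 + 1) / 2) with (1 / 2) by field; rewrite ln_half; field.
- unfold gap_pow23_num; replace ((1 ^ 2 + 1) / 2) with 1 by field; rewrite ln_1; field.
- intros t Ht; unfold gap_pow23_num, gap_pow23_num_slope; solve_derive.
- intros a b Ha Hab Hb Hd.
  assert (0 <= gap_pow23_num_slope a) by (destruct (Rle_lt_dec 0 (gap_pow23_num_slope a)); nra).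
  assert (gap_pow23_num_slope a < gap_pow23_num_slope b)
    by (apply gap_pow23_num_slope_increasing; lra).
  nra.
Qed.

Lemma gap_pow23_pos (s : R) : 0 < s < 1 -> 0 < gap_pow23 s.
Proof.
intros Hs.
replace 0 with (gap_pow23 1) by (unfold gap_pow23; rewrite pow1; apply identric_gap_1).
apply (gt_of_derive_neg _ (fun t => 3 * gap_pow23_num t / (t ^ 4 * ln 2))); [lra | |].
- intros t Ht; unfold gap_pow23, identric_gap, gap_pow23_num; solve_derive.
- intros t Ht; assert (gap_pow23_num t < 0) by (apply gap_pow23_num_neg; lra).
  assert (0 < t ^ 4 * ln 2) by (apply Rmult_lt_0_compat; [apply pow_lt; lra | apply ln2_pos]).
  unfold Rdiv; assert (0 < / (t ^ 4 * ln 2)) by (apply Rinv_0_lt_compat; lra); nra.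
Qed.

Definition gap_mean1 (x : R) : R := identric_gap x (ln ((x + 1) / 2)).
Definition gap_mean1_num (x : R) : R := x - 1 - ln ((x + 1) / 2) - x * (x - 1) / (1 + x).

Lemma gap_mean1_num_neg (x : R) : 0 < x < 1 -> gap_mean1_num x < 0.
Proof.
intros Hx.
replace 0 with (gap_mean1_num 1)
  by (unfold gap_mean1_num; replace ((1 + 1) / 2) with 1 by field; rewrite ln_1; field).
apply (lt_of_derive_pos _ (fun t => (1 - t) / (1 + t) ^ 2)); [lra | |].
- intros t Ht; unfold gap_mean1_num; solve_derive.
- intros t Ht; apply Rdiv_lt_0_compat; [lra | apply pow_lt; lra].
Qed.

Lemma gap_mean1_pos (x : R) : 0 < x < 1 -> 0 < gap_mean1 x.
Proof.
intros Hx.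
replace 0 with (gap_mean1 1) by apply identric_gap_1.
apply (gt_of_derive_neg _ (fun t => gap_mean1_num t / t ^ 2)); [lra | |].
- intros t Ht; unfold gap_mean1, identric_gap, gap_mean1_num; solve_derive.
- intros t Ht; assert (gap_mean1_num t < 0) by (apply gap_mean1_num_neg; lra).
  unfold Rdiv; assert (0 < / t ^ 2) by (apply Rinv_0_lt_compat, pow_lt; lra); nra.
Qed.

Definition gap_pow1 (x : R) : R := identric_gap x (ln ((x + 1) / 2) / ln 2).
Definition gap_pow1_num (x : R) : R :=
  - ln 2 * (x - 1) + ln ((x + 1) / 2) - x * (1 - x) / (1 + x).
Definition gap_pow1_num_slope (x : R) : R :=
  - ln 2 + 1 / (1 + x) - (1 - 2 * x - x ^ 2) / (1 + x) ^ 2.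

Lemma gap_pow1_num_slope_increasing (t1 t2 : R) : 0 <= t1 -> t1 < t2 -> t2 <= 1 ->
  gap_pow1_num_slope t1 < gap_pow1_num_slope t2.
Proof.
intros H1 H12 H2.
apply (lt_of_derive_pos _ (fun s => (3 - s) / (1 + s) ^ 3)); [lra | |].
- intros t Ht; unfold gap_pow1_num_slope; solve_derive.
- intros t Ht; apply Rdiv_lt_0_compat; [lra | apply pow_lt; lra].
Qed.

Lemma gap_pow1_num_neg (x : R) : 0 < x < 1 -> gap_pow1_num x < 0.
Proof.
intros Hx.
apply (lt0_between_roots _ gap_pow1_num_slope 0 1); [lra | | | | | exact Hx].
- unfold gap_pow1_num; replace ((0 + 1) / 2) with (1 / 2) by field; rewrite ln_half; field.
- unfold gap_pow1_num; replace ((1 + 1) / 2) with 1 by field; rewrite ln_1; field.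
- intros t Ht; unfold gap_pow1_num, gap_pow1_num_slope; solve_derive.
- intros a b Ha Hab Hb Hd.
  assert (gap_pow1_num_slope a < gap_pow1_num_slope b)
    by (apply gap_pow1_num_slope_increasing; lra).
  lra.
Qed.

Lemma gap_pow1_neg (x : R) : 0 < x < 1 -> gap_pow1 x < 0.
Proof.
intros Hx.
replace 0 with (gap_pow1 1) by apply identric_gap_1.
apply (lt_of_derive_pos _ (fun t => - gap_pow1_num t / (t ^ 2 * ln 2))); [lra | |].
- intros t Ht; unfold gap_pow1, identric_gap, gap_pow1_num; solve_derive.
- intros t Ht; assert (gap_pow1_num t < 0) by (apply gap_pow1_num_neg; lra).
  apply Rdiv_lt_0_compat; [lra|].
  apply Rmult_lt_0_compat; [apply pow_lt; lra | apply ln2_pos].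
Qed.

Lemma lnA_2_3_lt_lnI (x : R) : 0 < x < 1 -> lnA (2 / 3) x < lnI x.
Proof.
intros Hx; destruct (exists_cube_root x Hx) as [s [Hs ->]].
rewrite lnA_neq0, lnm_2_3_cube by lra.
replace (1 / (2 / 3)) with (3 / 2) by field.
apply lt_lnI_of_gap_neg; [exact Hx | apply gap_mean23_neg, Hs].
Qed.

Lemma lnI_lt_lnm_2_3 (x : R) : 0 < x < 1 -> lnI x < lnm (2 / 3) x / ln 2.
Proof.
intros Hx; destruct (exists_cube_root x Hx) as [s [Hs ->]].
rewrite lnm_2_3_cube by lra.
apply lnI_lt_of_gap_pos; [exact Hx | apply gap_pow23_pos, Hs].
Qed.

Lemma lnm_1 (x : R) : 0 < x -> lnm 1 x = ln ((x + 1) / 2).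
Proof. intros Hx; unfold lnm; rewrite Rmult_1_l, exp_ln by exact Hx; reflexivity. Qed.

Lemma lnA_1 (x : R) : 0 < x -> lnA 1 x = ln ((x + 1) / 2).
Proof. intros Hx; rewrite lnA_neq0, lnm_1 by lra; field. Qed.

Lemma lnI_lt_lnA_1 (x : R) : 0 < x < 1 -> lnI x < lnA 1 x.
Proof.
intros Hx; rewrite lnA_1 by lra.
apply lnI_lt_of_gap_pos; [exact Hx | apply gap_mean1_pos, Hx].
Qed.

Lemma lnm_1_lt_lnI (x : R) : 0 < x < 1 -> lnm 1 x / ln 2 < lnI x.
Proof.
intros Hx; rewrite lnm_1 by lra.
apply lt_lnI_of_gap_neg; [exact Hx | apply gap_pow1_neg, Hx].
Qed.

Lemma Rdiv_ln2_lt (a b : R) : a < b -> a / ln 2 < b / ln 2.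
Proof.
intros Hab; apply Rmult_lt_compat_r; [apply Rinv_0_lt_compat, ln2_pos | exact Hab].
Qed.

Lemma mean_chain_le_2_3 (p x : R) : 0 < p <= 2 / 3 -> 0 < x < 1 ->
  powmean1 p x < identric1 x /\
  identric1 x < powmean1_pow p x /\
  powmean1_pow p x < upper_bound1 p x.
Proof.
intros Hp Hx.
rewrite powmean1_exp, identric1_exp, powmean1_pow_exp, upper_bound1_exp by lra.
assert (HA : lnA p x <= lnA (2 / 3) x).
{ destruct (Req_dec p (2 / 3)) as [->|]; [lra | left; apply lnA_increasing; lra]. }
assert (Hm : lnm (2 / 3) x <= lnm p x).
{ destruct (Req_dec p (2 / 3)) as [->|]; [lra | left; apply lnm_decreasing; lra]. }
assert (Hm2 : lnm (2 / 3) x / ln 2 <= lnm p x / ln 2).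
{ destruct Hm as [Hm | ->]; [left; apply Rdiv_ln2_lt, Hm | lra]. }
assert (L := ln2_gt_2_3).
assert (H1 := lnA_2_3_lt_lnI x Hx); assert (H2 := lnI_lt_lnm_2_3 x Hx).
assert (H3 := proj1 (lnm_div_ln2_lnub_cmp x p Hx ltac:(lra)) ltac:(lra)).
split; [|split]; apply exp_increasing; lra.
Qed.

Lemma mean_chain_ge_1 (p x : R) : 1 <= p -> 0 < x < 1 ->
  powmean1 p x > identric1 x /\
  identric1 x > powmean1_pow p x /\
  powmean1_pow p x > upper_bound1 p x.
Proof.
intros Hp Hx; unfold Rgt.
rewrite powmean1_exp, identric1_exp, powmean1_pow_exp, upper_bound1_exp by lra.
assert (HA : lnA 1 x <= lnA p x).
{ destruct (Req_dec p 1) as [->|]; [lra | left; apply lnA_increasing; lra]. }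
assert (Hm : lnm p x / ln 2 <= lnm 1 x / ln 2).
{ destruct (Req_dec p 1) as [->|]; [lra | left; apply Rdiv_ln2_lt, lnm_decreasing; lra]. }
assert (L := ln2_lt_1).
assert (H1 := lnI_lt_lnA_1 x Hx); assert (H2 := lnm_1_lt_lnI x Hx).
assert (H3 := proj2 (lnm_div_ln2_lnub_cmp x p Hx ltac:(lra)) ltac:(lra)).
split; [|split]; apply exp_increasing; lra.
Qed.

Lemma means_monotone_in_p (x : R) : 0 < x < 1 ->
  (forall p q : R, p < q -> powmean1 p x < powmean1 q x) /\
  (forall p q : R, p < q -> powmean1_pow q x < powmean1_pow p x) /\
  (forall p q : R, 0 < p -> p < q -> upper_bound1 q x < upper_bound1 p x).
Proof.
intros Hx; split; [|split]; intros p q.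
- intros Hpq; rewrite !powmean1_exp by lra.
  apply exp_increasing, lnA_increasing; assumption.
- intros Hpq; rewrite !powmean1_pow_exp by lra.
  apply exp_increasing, Rdiv_ln2_lt, lnm_decreasing; assumption.
- intros Hp Hpq; rewrite !upper_bound1_exp by lra.
  apply exp_increasing, lnub_decreasing; assumption.
Qed.

(* Near [x = 1], [I(x,1)] and [A_p(x,1)] both tend to 1; we test at [x = w ^ 2]
   with [A_0(x,1) = w] and [c w > 1]. *)
Lemma identric_lower_const_optimal (p c : R) : 0 < p ->
  (forall x, 0 < x < 1 -> c * powmean1 p x <= identric1 x) -> c <= 1.
Proof.
intros Hp Hc; destruct (Rle_lt_dec c 1) as [|Hc1]; [assumption | exfalso].
set (w := (1 + 1 / c) / 2).
assert (Hic : 0 < 1 / c < 1).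
{ split; [apply Rdiv_lt_0_compat; lra|].
  apply (Rmult_lt_reg_r c); [lra|]; unfold Rdiv; rewrite Rmult_assoc, Rinv_l by lra; lra. }
assert (Hw : 1 / 2 < w < 1) by (unfold w; lra).
set (x := w ^ 2).
assert (Hx : 0 < x < 1) by (unfold x; simpl; nra).
assert (HA0 : powmean1 0 x = w).
{ unfold powmean1; destruct (Req_EM_T 0 0); [|lra]; apply sqrt_pow2; lra. }
assert (HAp := proj1 (means_monotone_in_p x Hx) 0 p Hp); rewrite HA0 in HAp.
assert (HI : identric1 x < 1).
{ rewrite identric1_exp, <- exp_0; apply exp_increasing.
  assert (H := lnI_lt_lnA_1 x Hx); rewrite lnA_1 in H by lra.
  assert (ln ((x + 1) / 2) < 0) by (apply ln_lt_0; lra); lra. }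
assert (c * w < c * powmean1 p x) by (apply Rmult_lt_compat_l; lra).
assert (c * w = (c + 1) / 2) by (unfold w; field; lra).
assert (Hcx := Hc x Hx); lra.
Qed.

Lemma exists_powmean1_lt (p C : R) : 0 < p -> 0 < C -> C < exp (-1) * Rpower 2 (1 / p) ->
  exists x, 0 < x < 1 /\ C * powmean1 p x < exp (-1).
Proof.
intros Hp HC HCK.
assert (HlnC : ln C < -1 + 1 / p * ln 2).
{ rewrite <- (ln_exp (-1 + 1 / p * ln 2)); apply ln_increasing; [exact HC|].
  rewrite exp_plus; exact HCK. }
set (b := p * (-1 - ln C) + ln 2).
assert (Hb : 0 < b).
{ assert (HpC : p * ln C < p * (-1 + 1 / p * ln 2)) by (apply Rmult_lt_compat_l; lra).
  replace (p * (-1 + 1 / p * ln 2)) with (- p + ln 2) in HpC by (field; lra).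
  unfold b; lra. }
set (y := Rmin (1 / 2) (b / 2)).
assert (Hy : 0 < y < 1) by (split; [apply Rmin_pos | apply (Rle_lt_trans _ (1 / 2)); [apply Rmin_l|]]; lra).
assert (Hyb : y < b) by (apply (Rle_lt_trans _ (b / 2)); [apply Rmin_r | lra]).
assert (Hly : ln y < 0) by (apply ln_lt_0, Hy).
exists (exp (1 / p * ln y)); split.
{ split; [apply exp_pos|]; rewrite <- exp_0 at 2; apply exp_increasing.
  assert (0 < 1 / p) by (apply Rdiv_lt_0_compat; lra); nra. }
rewrite powmean1_exp, lnA_neq0 by (try apply exp_pos; lra); unfold lnm.
rewrite ln_exp; replace (p * (1 / p * ln y)) with (ln y) by (field; lra).
rewrite exp_ln by lra.
rewrite <- (exp_ln C) at 1 by exact HC; rewrite <- exp_plus; apply exp_increasing.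
rewrite ln_div by lra.
assert (Hln1 : ln (y + 1) < y).
{ rewrite <- (ln_exp y) at 2; apply ln_increasing; [lra|].
  rewrite Rplus_comm; apply exp_ineq1; lra. }
assert (Hexp : 1 / p * (ln (y + 1) - ln 2) < 1 / p * (b - ln 2))
  by (apply Rmult_lt_compat_l; [apply Rdiv_lt_0_compat|]; lra).
replace (1 / p * (b - ln 2)) with (-1 - ln C) in Hexp by (unfold b; field; lra).
lra.
Qed.

(* As [x -> 0], [I(x,1) -> 1/e] while [A_p(x,1) -> 2^(-1/p)]. *)
Lemma identric_upper_const_optimal (p C : R) : 0 < p ->
  (forall x, 0 < x < 1 -> identric1 x <= C * powmean1 p x) ->
  exp (-1) * Rpower 2 (1 / p) <= C.
Proof.
intros Hp HCx; destruct (Rle_lt_dec (exp (-1) * Rpower 2 (1 / p)) C) as [|HCK];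
  [assumption | exfalso].
assert (HC : 0 < C).
{ assert (Hhalf := HCx (1 / 2) ltac:(lra)).
  rewrite identric1_exp, powmean1_exp in Hhalf by lra.
  assert (0 < exp (lnI (1 / 2))) by apply exp_pos.
  assert (0 < exp (lnA p (1 / 2))) by apply exp_pos.
  destruct (Rle_lt_dec C 0); [nra | assumption]. }
destruct (exists_powmean1_lt p C Hp HC HCK) as [x [Hx Hlt]].
assert (exp (-1) < identric1 x) by (apply exp_increasing, lnI_gt_m1, Hx).
assert (Hbound := HCx x Hx); lra.
Qed.

Theorem mainTheorem10 :
  (* chain of inequalities for p in (0, 2/3] *)
  (forall p x : R, 0 < p <= 2 / 3 -> 0 < x < 1 ->
     powmean1 p x < identric1 x /\
     identric1 x < powmean1_pow p x /\
     powmean1_pow p x < upper_bound1 p x) /\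
  (* best constants for p in (0, 2/3] *)
  (forall p : R, 0 < p <= 2 / 3 ->
     (forall x, 0 < x < 1 -> 1 * powmean1 p x <= identric1 x) /\
     (forall c : R, (forall x, 0 < x < 1 -> c * powmean1 p x <= identric1 x) -> c <= 1) /\
     (forall x, 0 < x < 1 ->
        identric1 x <= exp (-1) * Rpower 2 (1 / p) * powmean1 p x) /\
     (forall C : R, (forall x, 0 < x < 1 -> identric1 x <= C * powmean1 p x) ->
        exp (-1) * Rpower 2 (1 / p) <= C)) /\
  (* reversed chain for p >= 1 *)
  (forall p x : R, 1 <= p -> 0 < x < 1 ->
     powmean1 p x > identric1 x /\
     identric1 x > powmean1_pow p x /\
     powmean1_pow p x > upper_bound1 p x) /\
  (* monotonicity in p for fixed x in (0,1) *)
  (forall x : R, 0 < x < 1 ->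
     (forall p q : R, p < q -> powmean1 p x < powmean1 q x) /\
     (forall p q : R, p < q -> powmean1_pow q x < powmean1_pow p x) /\
     (forall p q : R, 0 < p -> p < q -> upper_bound1 q x < upper_bound1 p x)).
Proof.
split; [exact mean_chain_le_2_3|].
split; [|split; [exact mean_chain_ge_1 | exact means_monotone_in_p]].
intros p Hp; split; [|split; [|split]].
- intros x Hx; rewrite Rmult_1_l; left; apply (mean_chain_le_2_3 p x Hp Hx).
- intros c; apply identric_lower_const_optimal; lra.
- intros x Hx; destruct (mean_chain_le_2_3 p x Hp Hx) as [_ [HI Hub]].
  unfold upper_bound1 in Hub; lra.
- intros C; apply identric_upper_const_optimal; lra.
Qed.
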